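(* Let $n\ge 0$ and $\alpha\ge 1$ be integers, $N=2^{n+1}$, $c=2^{\alpha}+1$, and consider the 1D-Tree and the $c$-DAG over the uniform dataset $\mathcal{D}=\{0,\dots,N-1\}$ (as described in the context). For $s=1$, \[ \mathbb{E}_{\mathcal{I}_1}\left[\frac{FP_{\mathrm{Tree}}(Q)}{FP_{c\text{-DAG}}(Q)}\right]=1, \] and for every real $s$ with $1<s\le N$, \[ \mathbb{E}_{\mathcal{I}_s}\left[\frac{FP_{\mathrm{Tree}}(Q)}{FP_{c\text{-DAG}}(Q)}\right]\ \ge\ \max\left\{1,\ \frac12\left\lfloor\log_2\frac{N}{s}\right\rfloor\right\}. \]
   Context: The 1D-Tree over $\mathcal{D}=\{0,\dots,N-1\}\subset[0,N)$ has levels $\ell=0,\dots,n+1$; its level-$\ell$ nodes are the intervals $[m2^{n-\ell+1},(m+1)2^{n-\ell+1})$, $m=0,\dots,2^\ell-1$. The $c$-DAG over $\mathcal{D}$ has levels $\ell=0,\dots,n+1$; with $u_\ell=2^{n-\ell+1}/(c-1)$, its level-$\ell$ nodes are the intervals $[mu_\ell,\,mu_\ell+2^{n-\ell+1})$, $m=0,1,\dots,(c-1)2^\ell-(c-1)$ (a node $[a,a+L)$ has children $[a+jL/(2(c-1)),\,a+jL/(2(c-1))+L/2)$, $j=0,\dots,c-1$). For a query $Q$, SRC-search on a structure returns a node $v$ of the deepest level whose interval contains $Q$. The competitive false-positive ratio is $\frac{FP_{\mathrm{Tree}}(Q)}{FP_{c\text{-DAG}}(Q)}=\frac{|\mathcal{D}\cap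 \mathrm{range}_v|}{|\mathcal{D}\cap\mathrm{range}_w|}$, where $v$ is the node returned on the 1D-Tree and $w$ the node returned on the $c$-DAG (all nodes of a given level contain the same number of data points). For query length $s$, $\mathcal{I}_s$ is the distribution of $Q=[x,x+s)$ with $x$ uniform on $[0,N-s]$ (for $s=N$, $x=0$); for $s=1$ queries are single data points, i.e. $x$ uniform on the integers $\{0,\dots,N-1\}$. *)

From HB Require Import structures.
From mathcomp Require Import all_boot all_order all_algebra.
From mathcomp Require Import all_classical all_reals all_analysis.
Set Implicit Arguments. Unset Strict Implicit. Unset Printing Implicit Defensive.
Import Order.TTheory GRing.Theory Num.Theory.
Local Open Scope ring_scope.

Definition Npts (n : nat) : nat := (2 ^ n.+1)%N.

Definition lvl_len (n l : nat) : nat := (2 ^ (n.+1 - l))%N.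

Definition data_in {R : realType} (n : nat) (a L : R) : nat :=
  #|[set i : 'I_(Npts n) | (a <= (i : nat)%:R) && ((i : nat)%:R < a + L)]|.

Definition contains {R : realType} (a L x s : R) : bool :=
  (a <= x) && (x + s <= a + L).

(* level-l node m (m < 2^l): [m 2^(n-l+1), (m+1) 2^(n-l+1)) *)
Definition tree_start {R : realType} (n l m : nat) : R := (m * lvl_len n l)%:R.

Definition tree_hit {R : realType} (n l : nat) (x s : R) : bool :=
  [exists m : 'I_(2 ^ l), contains (@tree_start R n l m) (lvl_len n l)%:R x s].

Definition tree_depth {R : realType} (n : nat) (x s : R) : nat :=
  (\max_(l < n.+2 | tree_hit n l x s) (l : nat))%N.

(* FP_Tree(Q) = |D ∩ range_v| for the node v returned by SRC-search *)
Definition FP_tree {R : realType} (n : nat) (x s : R) : nat :=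
  let d := tree_depth n x s in
  match [pick m : 'I_(2 ^ d) | contains (@tree_start R n d m) (lvl_len n d)%:R x s] with
  | Some m => data_in n (@tree_start R n d m) (lvl_len n d)%:R
  | None => 0%N
  end.

(* level-l nodes [m u_l, m u_l + 2^(n-l+1)), u_l = 2^(n-l+1)/(c-1),
   m = 0, 1, ..., (c-1)2^l - (c-1). *)
Definition dag_count (c l : nat) : nat := ((c - 1) * 2 ^ l - (c - 1)).+1.

Definition dag_start {R : realType} (n c l m : nat) : R :=
  m%:R * ((lvl_len n l)%:R / (c - 1)%:R).

Definition dag_hit {R : realType} (n c l : nat) (x s : R) : bool :=
  [exists m : 'I_(dag_count c l), contains (@dag_start R n c l m) (lvl_len n l)%:R x s].

Definition dag_depth {R : realType} (n c : nat) (x s : R) : nat :=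
  (\max_(l < n.+2 | dag_hit n c l x s) (l : nat))%N.

Definition FP_dag {R : realType} (n c : nat) (x s : R) : nat :=
  let d := dag_depth n c x s in
  match [pick m : 'I_(dag_count c d) | contains (@dag_start R n c d m) (lvl_len n d)%:R x s] with
  | Some m => data_in n (@dag_start R n c d m) (lvl_len n d)%:R
  | None => 0%N
  end.

Definition fp_ratio {R : realType} (n c : nat) (x s : R) : R :=
  (FP_tree n x s)%:R / (FP_dag n c x s)%:R.

(* E_{I_1}: x uniform on the integers {0,...,N-1}, Q = [x, x+1) *)
Definition expect_I1 {R : realType} (n c : nat) : R :=
  ((Npts n)%:R)^-1 * \sum_(i < Npts n) fp_ratio n c ((i : nat)%:R : R) 1.

(* E_{I_s} for 1 < s <= N: x uniform on [0, N-s] (x = 0 when s = N). *)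
Local Open Scope ereal_scope.
Definition expect_Is {R : realType} (n c : nat) (s : R) : \bar R :=
  if s == (Npts n)%:R then (fp_ratio n c 0 s)%:E
  else (((Npts n)%:R - s)^-1)%:E *
       \int[@lebesgue_measure R]_(x in `[0%R, ((Npts n)%:R - s)%R]%classic)
          (fp_ratio n c x s)%:E.

(* For Q = [x, x + s) inside [0, N), both structures return a node of the deepest
   level containing Q, so FP_Tree = 2^(n+1-d_T) and FP_DAG = 2^(n+1-d_D).
   Every tree node is a DAG node, so d_T <= d_D and the ratio is at least 1, with
   equality for unit queries at data points.  As c - 1 is even, the DAG contains at
   level l every interval of length 2^(n+1-l) starting at a multiple of half that
   length.  Let k = floor(log2(N/s)), so that L/2 < s <= L for L = 2^(n+1-k).  If Q
   straddles the midpoint b of a level-j tree node (j < k), the tree stops at depth <= j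
   while the DAG still contains Q at level k-1, and at level k when Q lies in
   [b - L/2, b + L/2); the ratio is then at least 2^(k-1-j), resp. 2^(k-j).  These
   midpoints are distinct multiples of L >= s, so Q straddles at most one of them,
   and integrating the resulting minorant over x in [0, N - s] gives
   integral >= k 2^n = k N / 2 >= (N - s) k / 2. *)

From HB Require Import structures.
From mathcomp Require Import all_boot all_order all_algebra.
From mathcomp Require Import all_classical all_reals all_analysis.
From mathcomp Require Import measurable_realfun.
From mathcomp Require Import zify ring lra.

Set Implicit Arguments.
Unset Strict Implicit.
Unset Printing Implicit Defensive.

Import Order.TTheory GRing.Theory Num.Theory.
Local Open Scope ring_scope.

Lemma count_le1 (T : eqType) (P : pred T) (s : seq T) :
  uniq s -> {in s &, forall a b, P a -> P b -> a = b} -> (count P s <= 1)%N.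
Proof.
move=> s_uniq P_eq; rewrite -size_filter.
case fs : (seq.filter P s) => [//|a t].
have : a \in seq.filter P s by rewrite fs mem_head.
rewrite mem_filter => /andP[Pa sa].
rewrite -fs (@uniq_leq_size _ _ [:: a]) ?filter_uniq // => y.
by rewrite mem_filter inE => /andP[Py sy]; apply/eqP; exact: P_eq.
Qed.

Lemma sum_sum_bool_le1 (k : nat) (m : nat -> nat) (b : nat -> nat -> bool) :
  (forall j q j' q', (j < k)%N -> (q < m j)%N -> (j' < k)%N -> (q' < m j')%N ->
     b j q -> b j' q' -> j = j' /\ q = q') ->
  (\sum_(0 <= j < k) \sum_(0 <= q < m j) b j q <= 1)%N.
Proof.
move=> b_eq.
set S := [seq (j, q) | j <- index_iota 0 k, q <- index_iota 0 (m j)].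
pose B (p : nat * nat) := b p.1 p.2.
have -> : (\sum_(0 <= j < k) \sum_(0 <= q < m j) b j q)%N = count B S.
  transitivity (\sum_(p <- S) (B p : nat))%N; first by rewrite big_allpairs_dep.
  by rewrite -sum1_count [RHS]big_mkcond; apply: eq_bigr => p _; case: ifP.
apply: count_le1.
  apply: allpairs_uniq_dep => [||[j q] [j' q'] _ _ [-> ->]] //; first exact: iota_uniq.
  by move=> j _; exact: iota_uniq.
move=> _ _ /allpairsPdep[j [q [jk qm ->]]] /allpairsPdep[j' [q' [jk' qm' ->]]] bjq bjq'.
move: jk qm jk' qm'; rewrite !mem_index_iota => /andP[_ jk] /andP[_ qm] /andP[_ jk'] /andP[_ qm'].
by have [-> ->] := b_eq _ _ _ _ jk qm jk' qm' bjq bjq'.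
Qed.

Lemma odd_mul_expn2_inj (m m' a a' : nat) : odd m -> odd m' ->
  (m * 2 ^ a = m' * 2 ^ a')%N -> m = m' /\ a = a'.
Proof.
move=> m_odd m'_odd eq_ma.
have logn2 (k b : nat) : odd k -> logn 2 (k * 2 ^ b) = b.
  by move=> k_odd; rewrite logn_Gauss ?coprime2n // pfactorK.
have aa' : a = a' by rewrite -(logn2 m a) // -(logn2 m' a') // eq_ma.
by move: eq_ma; rewrite aa' => /eqP; rewrite eqn_pmul2r ?expn_gt0 // => /eqP.
Qed.

Lemma card_ord_itv (N c L : nat) : (c + L <= N)%N ->
  #|[set i : 'I_N | (c <= i < c + L)%N]| = L.
Proof.
move=> cLN; rewrite -sum1_card (eq_bigl (fun i : 'I_N => c <= i < c + L)%N); last first.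
  by move=> i; rewrite inE.
rewrite -(big_mkord (fun i => c <= i < c + L)%N (fun=> 1%N)).
rewrite [LHS](_ : _ = \sum_(c <= i < c + L) 1)%N; first by rewrite sum_nat_const_nat; lia.
rewrite [RHS](big_nat_widenl _ 0) // [RHS](big_nat_widen _ _ _ _ _ cLN).
by apply: eq_bigl => i; rewrite andbC.
Qed.

Lemma data_in_itv (R : realType) (n : nat) (a : R) (L : nat) :
  0 <= a -> a + L%:R <= (Npts n)%:R -> data_in n a L%:R = L.
Proof.
move=> a0 aLN.
have [c cE] : exists c : nat, Num.ceil a = c%:Z.
  by exists `|Num.ceil a|%N; rewrite gez0_abs // ceil_ge0; lra.
have le_a (i : int) : (a <= i%:~R) = (c%:Z <= i) by rewrite -ceil_le_int cE.
have cLN : (c + L <= Npts n)%N.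
  suff : (c%:Z <= (Npts n)%:Z - L%:Z) by lia.
  by rewrite -le_a rmorphB /=; lra.
rewrite -[RHS](card_ord_itv cLN); apply: eq_card => i; rewrite !inE.
have -> : (i%:R < a + L%:R :> R) = ~~ (a <= (i%:Z - L%:Z)%:~R) by rewrite rmorphB /= -ltNge ltrBlDr.
rewrite -[i%:R]/((i : nat)%:Z%:~R) !le_a; lia.
Qed.

Lemma lvl_len_gt0 n l : (0 < lvl_len n l)%N.
Proof. by rewrite expn_gt0. Qed.

Lemma expn_mul_lvl_len n l : (l <= n.+1)%N -> (2 ^ l * lvl_len n l)%N = Npts n.
Proof. by move=> ln; rewrite -expnD subnKC. Qed.

Lemma leq_lvl_len n l l' : (l <= l')%N -> (lvl_len n l' <= lvl_len n l)%N.
Proof. by move=> ll'; rewrite leq_pexp2l //; lia. Qed.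

Lemma lvl_len_expn n j l : (j <= l <= n.+1)%N -> lvl_len n j = (2 ^ (l - j) * lvl_len n l)%N.
Proof. by move=> jln; rewrite /lvl_len -expnD; congr (2 ^ _)%N; lia. Qed.

Lemma lvl_len_double n l : (l <= n)%N -> lvl_len n l = (2 * 2 ^ (n - l))%N.
Proof. by move=> ln; rewrite /lvl_len -expnS; congr (2 ^ _)%N; lia. Qed.

Lemma bigmax_level_hit m (P : nat -> bool) : P 0%N ->
  P (\max_(l < m.+1 | P l) l)%N /\ (\max_(l < m.+1 | P l) l <= m)%N.
Proof.
move=> P0; have [|l Pl ->] := @eq_bigmax_cond _ (fun l : 'I_m.+1 => P l) (@nat_of_ord _).
  by apply/card_gt0P; exists ord0.
by split => //; rewrite -ltnS.
Qed.

Lemma leq_bigmax_level m (P : nat -> bool) l : (l <= m)%N -> P l ->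
  (l <= \max_(i < m.+1 | P i) i)%N.
Proof. by move=> lm; exact: (@leq_bigmax_cond _ _ (@nat_of_ord _) (Ordinal (lm : l < m.+1)%N)). Qed.

Section Nodes.
Variables (R : realType) (n : nat).
Local Notation N := ((Npts n)%:R : R).

Lemma pick_data_in (I : finType) (a : I -> R) (L : nat) (x s : R) :
  (exists m, contains (a m) L%:R x s) -> (forall m, 0 <= a m /\ a m + L%:R <= N) ->
  match [pick m | contains (a m) L%:R x s] with
  | Some m => data_in n (a m) L%:R
  | None => 0%N
  end = L.
Proof.
move=> [m0 hit0] range; case: pickP => [m _|none]; last by move: (none m0); rewrite hit0.
by have [] := range m; exact: data_in_itv.
Qed.

Lemma tree_node_range l (m : 'I_(2 ^ l)) : (l <= n.+1)%N ->
  0 <= @tree_start R n l m /\ @tree_start R n l m + (lvl_len n l)%:R <= N.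
Proof.
move=> ln; split => //; rewrite /tree_start -natrD ler_nat -(expn_mul_lvl_len ln).
by have := ltn_ord m; nia.
Qed.

Lemma dag_node_range c l (m : 'I_(dag_count c l)) : (1 < c)%N -> (l <= n.+1)%N ->
  0 <= @dag_start R n c l m /\ @dag_start R n c l m + (lvl_len n l)%:R <= N.
Proof.
move=> c_gt1 ln; have c1_gt0 : (0 < (c - 1)%:R :> R) by rewrite ltr0n; lia.
split; first by rewrite /dag_start mulr_ge0 ?divr_ge0.
have -> : @dag_start R n c l m + (lvl_len n l)%:R
    = ((m + (c - 1)) * lvl_len n l)%:R / (c - 1)%:R.
  by rewrite /dag_start natrM natrD; field; rewrite gt_eqF.
rewrite ler_pdivrMr // -natrM ler_nat -(expn_mul_lvl_len ln).
by have := ltn_ord m; rewrite /dag_count; nia.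
Qed.

Lemma tree_depth_cross (x s : R) j P : (j <= n)%N ->
  x < (P * 2 ^ (n - j))%:R -> (P * 2 ^ (n - j))%:R < x + s -> (tree_depth n x s <= j)%N.
Proof.
move=> jn lt_b b_lt; apply/bigmax_leqP => l /existsP[m /andP[m_le le_m]].
rewrite leqNgt; apply/negP => jl.
set L := lvl_len n l; set P' := (P * 2 ^ (l.-1 - j))%N.
have bE : (P * 2 ^ (n - j) = P' * L)%N.
  by rewrite -mulnA /L /lvl_len -expnD; congr (_ * 2 ^ _)%N; have := ltn_ord l; lia.
rewrite /tree_start -/L bE in lt_b b_lt m_le le_m.
have : (m * L < P' * L)%N by rewrite -(ltr_nat R); exact: le_lt_trans lt_b.
have : (P' * L < m.+1 * L)%N.
  by rewrite -(ltr_nat R) mulSn natrD addrC; exact: lt_le_trans le_m.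
by rewrite !ltn_pmul2r ?lvl_len_gt0 //; lia.
Qed.

Variable c : nat.
Hypotheses (c_gt1 : (1 < c)%N) (c_odd : odd c).

Lemma dag_hit_half l p (x s : R) : (p <= 2 ^ l.+1 - 2)%N ->
  contains (p%:R * ((lvl_len n l)%:R / 2)) (lvl_len n l)%:R x s -> dag_hit n c l x s.
Proof.
have [h h_gt0 hE] : exists2 h, (0 < h)%N & (c - 1 = 2 * h)%N.
  by exists c./2; have := odd_double_half c; rewrite c_odd -muln2; lia.
move=> p_le hit; apply/existsP.
have ph_lt : (p * h < dag_count c l)%N by rewrite /dag_count hE expnS in p_le *; nia.
exists (Ordinal ph_lt); congr (contains _ _ x s): hit.
by rewrite /dag_start hE !natrM; field; rewrite pnatr_eq0 -lt0n.
Qed.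

Lemma tree_dag_hit l (x s : R) : tree_hit n l x s -> dag_hit n c l x s.
Proof.
move=> /existsP[m hit]; apply: (@dag_hit_half l (2 * m)).
  by have := ltn_ord m; rewrite expnS; lia.
by congr (contains _ _ x s): hit; rewrite /tree_start !natrM; field.
Qed.

Section Query.
Variables x s : R.
Hypotheses (x_ge0 : 0 <= x) (xs_le : x + s <= N).

Lemma tree_hit_root : tree_hit n 0 x s.
Proof. by apply/existsP; exists ord0; rewrite /contains /tree_start /= mul0n add0r x_ge0. Qed.

Lemma tree_depth_hit :
  tree_hit n (tree_depth n x s) x s /\ (tree_depth n x s <= n.+1)%N.
Proof. exact: (@bigmax_level_hit _ (fun l => tree_hit n l x s)) tree_hit_root. Qed.

Lemma dag_depth_hit :
  dag_hit n c (dag_depth n c x s) x s /\ (dag_depth n c x s <= n.+1)%N.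
Proof.
exact: (@bigmax_level_hit _ (fun l => dag_hit n c l x s)) (tree_dag_hit tree_hit_root).
Qed.

Lemma FP_tree_lvl : FP_tree n x s = lvl_len n (tree_depth n x s).
Proof.
have [/existsP hit d_le] := tree_depth_hit.
by apply: pick_data_in => // m; exact: tree_node_range.
Qed.

Lemma FP_dag_lvl : FP_dag n c x s = lvl_len n (dag_depth n c x s).
Proof.
have [/existsP hit d_le] := dag_depth_hit.
by apply: pick_data_in => // m; exact: dag_node_range.
Qed.

Lemma fp_ratio_ge j l : (j <= l <= n.+1)%N -> (tree_depth n x s <= j)%N ->
  dag_hit n c l x s -> (2 ^ (l - j))%:R <= fp_ratio n c x s.
Proof.
move=> /andP[jl ln] td_le hit; rewrite /fp_ratio FP_tree_lvl FP_dag_lvl.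
have l_le : (l <= dag_depth n c x s)%N.
  exact: (@leq_bigmax_level _ (fun l => dag_hit n c l x s)).
rewrite ler_pdivlMr ?ltr0n ?lvl_len_gt0 // -natrM ler_nat.
apply: (@leq_trans (lvl_len n j)); last exact: leq_lvl_len.
by rewrite (@lvl_len_expn n j l) ?jl // leq_mul2l (leq_lvl_len n l_le) orbT.
Qed.

Lemma fp_ratio_ge1 : 1 <= fp_ratio n c x s.
Proof.
have [hit d_le] := tree_depth_hit.
have := @fp_ratio_ge _ _ _ (leqnn _) (tree_dag_hit hit).
by rewrite subnn expn0; apply; rewrite leqnn.
Qed.

End Query.

Lemma fp_ratio_point (i : nat) : (i < Npts n)%N -> fp_ratio n c (i%:R : R) 1 = 1.
Proof.
move=> iN; have x_ge0 : (0 : R) <= i%:R by [].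
have xs_le : (i%:R : R) + 1 <= N by rewrite natr1 ler_nat.
have td : tree_depth n (i%:R : R) 1 = n.+1.
  apply/eqP; rewrite eqn_leq (tree_depth_hit x_ge0 xs_le).2 /=.
  apply: (@leq_bigmax_level _ (fun l => tree_hit n l (i%:R : R) 1)) => //.
  apply/existsP; exists (Ordinal iN).
  by rewrite /contains /tree_start /lvl_len subnn muln1 lexx natr1 lexx.
apply/eqP; rewrite eq_le fp_ratio_ge1 // andbT /fp_ratio FP_tree_lvl // FP_dag_lvl // td.
by rewrite /lvl_len subnn ler_pdivrMr ?ltr0n ?expn_gt0 // mul1r ler1n expn_gt0.
Qed.

End Nodes.

Local Open Scope classical_set_scope.
Local Open Scope ring_scope.

(* [fp_ratio] is not known to be measurable; for nonnegative integrands the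
   integral is a supremum over simple functions below them, hence monotone anyway. *)
Lemma ge0_le_integral_nonmeasurable d (T : measurableType d) (R : realType)
    (mu : {measure set T -> \bar R}) (D : set T) (f g : T -> \bar R) :
  (forall x, D x -> (0 <= f x)%E) -> (forall x, D x -> (f x <= g x)%E) ->
  (\int[mu]_(x in D) f x <= \int[mu]_(x in D) g x)%E.
Proof.
move=> f_ge0 fg; rewrite integral_mkcond [leRHS]integral_mkcond.
have g_ge0 x : D x -> (0 <= g x)%E by move=> Dx; exact: le_trans (f_ge0 x Dx) (fg x Dx).
rewrite !ge0_integralTE; [|exact: erestrict_ge0|exact: erestrict_ge0].
apply: ereal_sup_le => _ [h hf <-]; exists h => //= x.
exact: le_trans (hf x) (lee_restrict fg x).
Qed.

Lemma integral_scaled_indic (R : realType) (D A : set R) (w : R) :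
  measurable D -> measurable A -> A `<=` D -> 0 <= w ->
  (\int[lebesgue_measure]_(x in D) (w * \1_A x)%:E = w%:E * lebesgue_measure A)%E.
Proof.
move=> mD mA AD w_ge0.
rewrite (@integralZl_indic _ _ _ lebesgue_measure D mD (fun=> A) w) //.
  by rewrite integral_indic // setIidl.
by move=> /lt_le_trans /(_ w_ge0); rewrite ltxx.
Qed.

Lemma lebesgue_measure_itv_le (R : realType) (a b : R) (x y : bool) : a <= b ->
  lebesgue_measure [set` Interval (BSide x a) (BSide y b)] = (b - a)%:E.
Proof.
move=> ab; rewrite lebesgue_measure_itv /= lte_fin.
have [_|ba] := ltP a b; first by rewrite -EFinD.
have -> : b = a by apply/le_anti; rewrite ab ba.
by rewrite subrr.
Qed.

Lemma floor_log2_spec (R : realType) (y : R) : 1 <= y ->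
  exists k : nat, Num.floor (ln y / ln 2) = k%:Z /\ (2 ^ k)%:R <= y < (2 ^ k.+1)%:R.
Proof.
move=> y_ge1; have ln2_gt0 : 0 < ln (2 : R) by rewrite ln_gt0 // ltr1n.
have y_gt0 : 0 < y by lra.
have [k kE] : exists k : nat, Num.floor (ln y / ln 2) = k%:Z.
  exists `|Num.floor (ln y / ln 2)|%N; rewrite gez0_abs // floor_ge0.
  by apply: divr_ge0; [exact: ln_ge0 | exact: ltW].
exists k; split => //; have /andP[lo hi] := floor_itv (ln y / ln 2).
rewrite kE ler_pdivlMr // in lo; rewrite kE ltr_pdivrMr // in hi.
have pow2_gt0 m : 0 < (2 : R) ^+ m by rewrite exprn_gt0.
rewrite !natrX; apply/andP; split.
  by rewrite -ler_ln ?posrE // lnXn // -[ln 2 *+ k]mulr_natl.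
by rewrite -ltr_ln ?posrE // lnXn // -[ln 2 *+ k.+1]mulr_natl -addn1.
Qed.

(* The midpoint of the q-th node of level j of the tree. *)
Definition breakpoint {R : realType} (n j q : nat) : R := ((2 * q + 1) * 2 ^ (n - j))%:R.

Definition straddling {R : realType} (s b : R) : set R := `]b - s, b[.

Definition centred {R : realType} (s h b : R) : set R := `[b - h, b + h - s].

Definition bump {R : realType} (n k : nat) (s : R) (j q : nat) (x : R) : R :=
  let b := breakpoint n j q in
  (2 ^ (k - 1 - j))%:R * (\1_(straddling s b) x + \1_(centred s (2 ^ (n - k))%:R b) x).

Definition ratio_minorant {R : realType} (n k : nat) (s x : R) : R :=
  \sum_(0 <= j < k) \sum_(0 <= q < 2 ^ j) bump n k s j q x.

Lemma bump_ge0 (R : realType) n k (s : R) j q x : 0 <= bump n k s j q x.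
Proof. by rewrite mulr_ge0 ?addr_ge0. Qed.

Lemma ratio_minorant_ge0 (R : realType) n k (s x : R) : 0 <= ratio_minorant n k s x.
Proof. by do 2!(apply: sumr_ge0 => ? _); exact: bump_ge0. Qed.

Lemma breakpointE (R : realType) n k j q : (j < k)%N -> (k <= n)%N ->
  breakpoint n j q = ((2 * q + 1) * 2 ^ (k - 1 - j) * lvl_len n k)%:R :> R.
Proof.
move=> jk kn; rewrite /breakpoint /lvl_len -mulnA -expnD; congr (_ * 2 ^ _)%:R%N; lia.
Qed.

Lemma breakpoint_index_lt k j q : (j < k)%N -> (q < 2 ^ j)%N ->
  (0 < (2 * q + 1) * 2 ^ (k - 1 - j) < 2 ^ k)%N.
Proof.
move=> jk qj; rewrite muln_gt0 expn_gt0 addn1 /=.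
have -> : (2 ^ k = 2 ^ j.+1 * 2 ^ (k - 1 - j))%N by rewrite -expnD; congr (2 ^ _)%N; lia.
by rewrite ltn_pmul2r ?expn_gt0 // expnS; lia.
Qed.

Section Minorant.
Variables (R : realType) (n k : nat) (s : R).
Local Notation N := ((Npts n)%:R : R).
Local Notation L := (lvl_len n k).

Hypothesis k_le : (k <= n)%N.

Lemma tree_depth_straddling j q (x : R) : (j < k)%N ->
  straddling s (breakpoint n j q) x -> (tree_depth n x s <= j)%N.
Proof.
move=> jk; rewrite /straddling /breakpoint /= in_itv /= => /andP[lt_x x_lt].
by apply: (tree_depth_cross _ x_lt); [lia | lra].
Qed.

Hypothesis s_le : s <= (lvl_len n k)%:R.

Lemma straddling_breakpoint_inj j q j' q' (x : R) :
  (j < k)%N -> (j' < k)%N ->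
  straddling s (breakpoint n j q) x -> straddling s (breakpoint n j' q') x -> j = j' /\ q = q'.
Proof.
move=> jk jk'; rewrite /straddling /= !in_itv /=.
rewrite (@breakpointE R n k j q jk k_le) (@breakpointE R n k j' q' jk' k_le).
have le_index (r r' : nat) : x < (r * L)%:R -> (r' * L)%:R - s < x -> (r' <= r)%N.
  move=> ? ?; rewrite -ltnS -(ltn_pmul2r (lvl_len_gt0 n k)) -(ltr_nat R) mulSn natrD.
  by have := s_le; lra.
move=> /andP[? ?] /andP[? ?].
have /eqP : ((2 * q + 1) * 2 ^ (k - 1 - j) == (2 * q' + 1) * 2 ^ (k - 1 - j'))%N.
  by rewrite eqn_leq !le_index.
by move/odd_mul_expn2_inj; rewrite !addn1 /= !mul2n !odd_double => /(_ isT isT) [? ?]; split; lia.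
Qed.

Hypothesis s_gt : (2 ^ (n - k))%:R < s.

Lemma centred_sub_straddling b : centred s (2 ^ (n - k))%:R b `<=` straddling s b.
Proof.
move=> x; rewrite /centred /straddling /= !in_itv /= => /andP[? ?].
by apply/andP; split; have := s_gt; lra.
Qed.

Lemma integral_bump j q : (j < k)%N -> (q < 2 ^ j)%N ->
  (\int[lebesgue_measure]_(x in `[0%R, (N - s)%R]) (bump n k s j q x)%:E = (2 ^ (n - j))%:R%:E)%E.
Proof.
move=> jk qj; rewrite /bump; set b := breakpoint n j q.
set w := (2 ^ (k - 1 - j))%:R.
have /andP[r_gt0 r_lt] := breakpoint_index_lt jk qj.
have LN := expn_mul_lvl_len (leqW k_le).
have b_ge : (L%:R <= b) by rewrite /b (@breakpointE R n k j q jk k_le) ler_nat leq_pmull.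
have b_le : (b + L%:R <= N).
  by rewrite /b (@breakpointE R n k j q jk k_le) -natrD ler_nat -LN -mulSnr leq_mul2r r_lt orbT.
have SD : straddling s b `<=` `[0, N - s].
  by move=> x; rewrite /straddling /= !in_itv /= => /andP[? ?]; apply/andP; split; have := s_le; lra.
have CD := subset_trans (@centred_sub_straddling b) SD.
have mS : measurable (straddling s b) by exact: measurable_itv.
have mC : measurable (centred s (2 ^ (n - k))%:R b) by exact: measurable_itv.
have w_ge0 : 0 <= w by [].
under eq_integral do rewrite mulrDr EFinD.
rewrite ge0_integralD //; last 4 first.
- by move=> x _; rewrite lee_fin mulr_ge0.
- by apply/measurable_EFinP/measurable_funM; [exact: measurable_cst|exact: measurable_indic].
- by move=> x _; rewrite lee_fin mulr_ge0.
- by apply/measurable_EFinP/measurable_funM; [exact: measurable_cst|exact: measurable_indic].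
rewrite !integral_scaled_indic //; try exact: measurable_itv.
have S_len : b - s <= b by have := le_lt_trans (ler0n R _) s_gt; lra.
have C_len : b - (2 ^ (n - k))%:R <= b + (2 ^ (n - k))%:R - s.
  by have := s_le; rewrite (lvl_len_double k_le) natrM; lra.
rewrite /straddling /centred !lebesgue_measure_itv_le //.
rewrite -!EFinM -EFinD /w; congr (_%:E).
have -> : (n - j = (k - 1 - j) + (n - k).+1)%N by lia.
by rewrite expnD expnS !natrM; ring.
Qed.

Lemma integral_ratio_minorant :
  (\int[lebesgue_measure]_(x in `[0%R, (N - s)%R]) (ratio_minorant n k s x)%:E
    = (k * 2 ^ n)%:R%:E)%E.
Proof.
have bump_mfun j q : measurable_fun `[0%R, (N - s)%R] (fun x => (bump n k s j q x)%:E).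
  apply/measurable_EFinP; rewrite /bump /=.
  apply: measurable_funM; first exact: measurable_cst.
  by apply: measurable_funD; apply: measurable_indic; exact: measurable_itv.
have -> : (fun x => (ratio_minorant n k s x)%:E)
    = (fun x => \sum_(0 <= j < k) \sum_(0 <= q < 2 ^ j) (bump n k s j q x)%:E)%E.
  by apply: funext => x; rewrite -sumEFin; apply: eq_bigr => j _; rewrite sumEFin.
rewrite ge0_integral_sum //; last 2 first.
- by move=> j; apply: emeasurable_sum => q; exact: bump_mfun.
- by move=> j x _; apply: sume_ge0 => q _; rewrite lee_fin bump_ge0.
rewrite (eq_big_nat _ _ (F2 := fun=> (2 ^ n)%:R%:E)) => [|j /andP[_ jk]].
  by rewrite sumEFin sumr_const_nat subn0 natrM mulr_natl.
rewrite ge0_integral_sum //; last 2 first.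
- by move=> q; exact: bump_mfun.
- by move=> q x _; rewrite lee_fin bump_ge0.
under eq_big_nat => q /andP[_ qj] do rewrite integral_bump //.
by rewrite sumEFin sumr_const_nat subn0 -mulrnA -expnD subnK //; lia.
Qed.

Variable c : nat.
Hypotheses (c_gt1 : (1 < c)%N) (c_odd : odd c).

Section Breakpoint.
Variables (j q : nat) (x : R).
Hypotheses (jk : (j < k)%N) (qj : (q < 2 ^ j)%N) (x_ge0 : 0 <= x) (xs_le : x + s <= N).

Lemma fp_ratio_ge_straddling :
  straddling s (breakpoint n j q) x -> (2 ^ (k - 1 - j))%:R <= fp_ratio n c x s.
Proof.
move=> Sx; have td := tree_depth_straddling jk Sx.
have /andP[r_gt0 r_lt] := breakpoint_index_lt jk qj.
move: Sx; rewrite /straddling /= in_itv /= (@breakpointE R n k j q jk k_le).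
move: ((2 * q + 1) * _)%N r_gt0 r_lt => r r_gt0 r_lt Sx.
apply: (fp_ratio_ge c_gt1 c_odd x_ge0 xs_le _ td); first by apply/andP; split; lia.
apply: (@dag_hit_half _ _ _ c_gt1 c_odd _ (r - 1)).
  by rewrite (_ : (k - 1).+1 = k); lia.
have -> : lvl_len n (k - 1) = (2 * lvl_len n k)%N.
  by rewrite /lvl_len -expnS; congr (2 ^ _)%N; lia.
rewrite /contains !natrM natrB //; have -> : (2 * L%:R / 2 : R) = L%:R by field.
by move: Sx s_le => /andP[? ?] ?; apply/andP; split; lra.
Qed.

Lemma fp_ratio_ge_centred :
  centred s (2 ^ (n - k))%:R (breakpoint n j q) x -> (2 ^ (k - j))%:R <= fp_ratio n c x s.
Proof.
move=> Cx; have td := tree_depth_straddling jk (centred_sub_straddling Cx).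
have /andP[r_gt0 r_lt] := breakpoint_index_lt jk qj.
move: Cx; rewrite /centred /= in_itv /= (@breakpointE R n k j q jk k_le).
move: ((2 * q + 1) * _)%N r_gt0 r_lt => r r_gt0 r_lt Cx.
apply: (fp_ratio_ge c_gt1 c_odd x_ge0 xs_le _ td); first by apply/andP; split; lia.
apply: (@dag_hit_half _ _ _ c_gt1 c_odd _ (2 * r - 1)); first by rewrite expnS; lia.
move: Cx; rewrite (lvl_len_double k_le) /contains !natrM natrB ?muln_gt0 // natrM.
set H := (2 ^ (n - k))%:R; have -> : (2 * H / 2 : R) = H by field.
by move=> /andP[? ?]; apply/andP; split; lra.
Qed.

Lemma bump_le :
  bump n k s j q x <= fp_ratio n c x s * \1_(straddling s (breakpoint n j q)) x.
Proof.
rewrite /bump !indicE; set b := breakpoint n j q.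
have [Sx|nSx] := boolP (x \in straddling s b); last first.
  have nCx : x \notin centred s (2 ^ (n - k))%:R b.
    by apply: contra nSx => /set_mem /centred_sub_straddling /mem_set.
  by rewrite (negbTE nCx) /= addr0 !mulr0.
have [Cx|nCx] := boolP (x \in centred s (2 ^ (n - k))%:R b); last first.
  by rewrite /= addr0 !mulr1; exact: fp_ratio_ge_straddling (set_mem Sx).
have := fp_ratio_ge_centred (set_mem Cx).
have -> : (2 ^ (k - j) = 2 ^ (k - 1 - j) * 2)%N by rewrite -expnSr; congr (2 ^ _)%N; lia.
by rewrite natrM mulr1.
Qed.

End Breakpoint.

Lemma ratio_minorant_le (x : R) : 0 <= x -> x + s <= N ->
  ratio_minorant n k s x <= fp_ratio n c x s.
Proof.
move=> x_ge0 xs_le.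
pose crossings := (\sum_(0 <= j < k) \sum_(0 <= q < 2 ^ j)
  (x \in straddling s (breakpoint n j q)))%N.
apply: (@le_trans _ _ (fp_ratio n c x s * crossings%:R)).
  rewrite natr_sum mulr_sumr; apply: ler_sum_nat => j /andP[_ jk].
  rewrite natr_sum mulr_sumr; apply: ler_sum_nat => q /andP[_ qj].
  by rewrite -indicE; exact: bump_le.
rewrite -[leRHS]mulr1 ler_wpM2l ?(le_trans ler01 (fp_ratio_ge1 _ _ x_ge0 xs_le)) //.
rewrite -[1]/(1%:R) ler_nat; apply: sum_sum_bool_le1 => j1 q1 j2 q2 jk1 _ jk2 _ S1 S2.
exact: straddling_breakpoint_inj jk1 jk2 (set_mem S1) (set_mem S2).
Qed.


End Minorant.

Section Expectation.
Variables (R : realType) (n : nat).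
Local Notation N := ((Npts n)%:R : R).

Lemma floor_log2_level (s : R) k : 1 < s ->
  (2 ^ k)%:R * s <= N -> N < (2 ^ k.+1)%:R * s ->
  [/\ (k <= n)%N, (2 ^ (n - k))%:R < s & s <= (lvl_len n k)%:R].
Proof.
move=> s_gt1 k_lo k_hi; have k_le : (k <= n)%N.
  rewrite -ltnS -(ltn_exp2l _ _ (isT : 1 < 2)%N) -(ltr_nat R).
  by apply: lt_le_trans k_lo; rewrite ltr_pMr // ltr0n expn_gt0.
split => //.
  rewrite -(ltr_pM2l (_ : 0 < (2 ^ k.+1)%:R)) ?ltr0n ?expn_gt0 // -natrM -expnD.
  by rewrite (_ : (k.+1 + (n - k) = n.+1)%N) //; lia.
rewrite -(ler_pM2l (_ : 0 < (2 ^ k)%:R)) ?ltr0n ?expn_gt0 //.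
by rewrite -natrM (expn_mul_lvl_len (leqW k_le)).
Qed.

Variable c : nat.
Hypotheses (c_gt1 : (1 < c)%N) (c_odd : odd c).

Lemma expect_I1_eq1 : expect_I1 (R := R) n c = 1.
Proof.
rewrite /expect_I1 (eq_bigr (fun=> 1)); last by move=> i _; exact: fp_ratio_point.
by rewrite sumr_const card_ord mulVf // pnatr_eq0 expn_eq0.
Qed.

Lemma integral_fp_ratio_ge_length (s : R) : s <= N ->
  ((N - s)%:E <= \int[lebesgue_measure]_(x in `[0%R, (N - s)%R]) (fp_ratio n c x s)%:E)%E.
Proof.
move=> s_le.
set D := [set` `[0%R, (N - s)%R]].
have <- : (\int[lebesgue_measure]_(x in D) (1 * \1_D x)%:E = (N - s)%:E)%E.
  rewrite integral_scaled_indic //; try exact: measurable_itv.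
  by rewrite mul1e lebesgue_measure_itv_le ?subr0 // subr_ge0.
apply: ge0_le_integral_nonmeasurable => [x _|x Dx]; first by rewrite lee_fin mul1r.
move: (Dx); rewrite /D /= in_itv /= => /andP[x_ge0 x_le].
by rewrite indicE mem_set // mul1r lee_fin fp_ratio_ge1 //; lra.
Qed.

Lemma integral_fp_ratio_ge_level (s : R) k :
  (k <= n)%N -> (2 ^ (n - k))%:R < s -> s <= (lvl_len n k)%:R ->
  ((k * 2 ^ n)%:R%:E <= \int[lebesgue_measure]_(x in `[0%R, (N - s)%R]) (fp_ratio n c x s)%:E)%E.
Proof.
move=> k_le s_gt s_le; rewrite -(integral_ratio_minorant k_le s_le s_gt).
apply: ge0_le_integral_nonmeasurable => [x _|x]; first by rewrite lee_fin ratio_minorant_ge0.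
rewrite /= in_itv /= => /andP[x_ge0 x_le]; rewrite lee_fin ratio_minorant_le //; lra.
Qed.

Lemma expect_Is_ge (s : R) : 1 < s -> s <= N ->
  ((Num.max 1 ((Num.floor (ln (N / s) / ln 2))%:~R / 2))%:E <= expect_Is n c s)%E.
Proof.
move=> s_gt1 s_le; have s_gt0 : 0 < s by lra.
have [|k [-> /andP[k_lo k_hi]]] := @floor_log2_spec R (N / s).
  by rewrite ler_pdivlMr // mul1r.
rewrite ler_pdivlMr // in k_lo; rewrite ltr_pdivrMr // in k_hi.
rewrite /expect_Is; case: eqP => [sN|/eqP sN].
  have k0 : k = 0%N.
    move: k_lo; rewrite -sN -[leRHS]mul1r ler_pM2r //.
    clear k_hi; case: k => // k; rewrite expnS natrM => pow_le1; exfalso.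
    have : 1 <= (2 ^ k)%:R :> R by rewrite ler1n expn_gt0.
    lra.
  rewrite k0 mul0r (max_l ler01) lee_fin fp_ratio_ge1 //; lra.
have s_lt_N : s < N by rewrite lt_neqAle sN s_le.
have [k_le s_gt s_le'] := floor_log2_level s_gt1 k_lo k_hi.
apply: (@le_trans _ _ ((N - s)^-1 * ((N - s) * Num.max 1 (k%:R / 2)))%:E).
  by rewrite mulKf // gt_eqF // subr_gt0.
rewrite EFinM lee_wpmul2l ?lee_fin ?invr_ge0 ?subr_ge0 //.
have [_|half_k_gt1] := leP (k%:R / 2 : R) 1; first by rewrite mulr1; exact: integral_fp_ratio_ge_length.
apply: le_trans (integral_fp_ratio_ge_level k_le s_gt s_le'); rewrite lee_fin natrM.
have N2 : N = 2 * (2 ^ n)%:R by rewrite /Npts expnS natrM.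
by rewrite N2 in s_lt_N *; nra.
Qed.

End Expectation.

Theorem theorem3 (R : realType) (n alpha : nat) (halpha : (1 <= alpha)%N) :
  let N : R := (Npts n)%:R in
  let c : nat := (2 ^ alpha + 1)%N in
  expect_I1 (R := R) n c = 1 /\
  (forall s : R, 1 < s -> s <= N ->
     ((Num.max 1 ((Num.floor (ln (N / s) / ln 2))%:~R / 2))%:E <= expect_Is n c s)%E).
Proof.
move=> N c; have c_gt1 : (1 < c)%N by rewrite /c addn1 ltnS expn_gt0.
have c_odd : odd c by rewrite /c addn1 /= oddX orbF -lt0n.
by split; [exact: expect_I1_eq1 | exact: expect_Is_ge].
Qed.
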